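(* Let $n \ge 2$ and let $n_1, m_1 \in \mathbb{Z}$ be such that $\mathcal{P}_n(n_1;m_1)$ is a regular presentation of $Q_{4n}$. Then $\mathcal{P}_n(m_1;n_1)$ is a regular presentation of $Q_{4n}$ and $\mathcal{P}_n(n_1;m_1) \simeq_{Q^*} \mathcal{P}_n(m_1;n_1)$. Furthermore, $\mathcal{E}_{n,r} \simeq_{Q^*} \mathcal{E}_{n,1-r}$ for all $r \in \mathbb{Z}$, where $\mathcal{E}_{n,r} := \mathcal{P}_n(2;1-r)$.
   Context: $Q_{4n}$ is identified with $\langle x, y \mid x^n y^{-2}, xyxy^{-1} \rangle$; $\mathcal{P}_n(n_1;m_1) = \langle x, y \mid x^n y^{-2},\ x^{n_1} y x^{m_1} y^{-1} x^{1-n_1} y x^{1-m_1} y^{-1} \rangle$, regular if $x\mapsto x$, $y\mapsto y$ induces an isomorphism of the presented group onto $Q_{4n}$. Two finite presentations on the same generators are $Q^*$-equivalent ($\simeq_{Q^*}$) if related by a finite sequence of the moves: replace a relator $r_i$ by $r_ir_j$ ($j\neq i$); replace $r_i$ by $r_i^{-1}$; replace $r_i$ by $wr_iw^{-1}$ for $w$ in the free group on the generators; replace every relator $r_i$ by $\phi(r_i)$ for an automorphism $\phi$ of the free group on the generators. *)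

From mathcomp Require Import all_boot all_order all_algebra.
From Stdlib Require Import Relations.
Set Implicit Arguments. Unset Strict Implicit. Unset Printing Implicit Defensive.
Import GRing.Theory Num.Theory.

(* A letter is (generator, inverted?) with generator false = x, true = y. *)
Definition letter := (bool * bool)%type.
Definition word := seq letter.
Definition linv (l : letter) : letter := (l.1, ~~ l.2).

Definition cons_red (l : letter) (w : word) : word :=
  match w with
  | l' :: w' => if l' == linv l then w' else l :: w
  | [::] => [:: l]
  end.

Definition reduce (w : word) : word := foldr cons_red [::] w.
Definition reduced (w : word) : bool := reduce w == w.

Lemma size_cons_red l w : (size (cons_red l w) <= (size w).+1)%N.
Proof. case: w => [|l' w] //=; case: ifP => _ //=; exact: leqW. Qed.

Lemma size_reduce w : (size (reduce w) <= size w)%N.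
Proof.
elim: w => [|l w IH] //=; apply: leq_trans (size_cons_red _ _) _; by [].
Qed.

Lemma reduce_cons_red l w : reduce w = w -> reduce (cons_red l w) = cons_red l w.
Proof.
case: w => [|l' w] //= Hw.
case: ifP => Hl.
- move: Hw; case E: (reduce w) => [|l'' u] /=.
    by move=> [] <-.
  case: ifP => _ Hu.
  + have := size_reduce w; rewrite E Hu /= ltnNge; by rewrite leqnSn.
  + by case: Hu.
- by rewrite /= Hw /= Hl.
Qed.

Lemma reduce_reduced w : reduced (reduce w).
Proof.
apply/eqP; elim: w => [|l w IH] //=; exact: reduce_cons_red.
Qed.

Definition F2 := {w : word | reduced w}.
Definition mkF (w : word) : F2 := exist _ (reduce w) (reduce_reduced w).
Definition fgone : F2 := mkF [::].
Definition fgmul (a b : F2) : F2 := mkF (proj1_sig a ++ proj1_sig b).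
Definition fginv (a : F2) : F2 := mkF (rev (map linv (proj1_sig a))).
Definition gx : F2 := mkF [:: (false, false)].
Definition gy : F2 := mkF [:: (true, false)].

Definition fgpow (g : F2) (k : int) : F2 :=
  match k with
  | Posz m => iter m (fgmul g) fgone
  | Negz m => iter m.+1 (fgmul (fginv g)) fgone
  end.

Definition fgprod (s : seq F2) : F2 := foldr fgmul fgone s.

Definition presentation := seq F2.

Definition Qpres (n : nat) : presentation :=
  [:: fgprod [:: fgpow gx n; fgpow gy (-2)];
      fgprod [:: gx; gy; gx; fginv gy]].

Definition Ppres (n : nat) (n1 m1 : int) : presentation :=
  [:: fgprod [:: fgpow gx n; fgpow gy (-2)];
      fgprod [:: fgpow gx n1; gy; fgpow gx m1; fginv gy;
                fgpow gx (1 - n1)%R; gy; fgpow gx (1 - m1)%R; fginv gy]].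

Definition Epres (n : nat) (r : int) : presentation := Ppres n 2 (1 - r)%R.

Inductive nclosure (rs : presentation) : F2 -> Prop :=
  | nc_one : nclosure rs fgone
  | nc_rel r : r \in rs -> nclosure rs r
  | nc_mul a b : nclosure rs a -> nclosure rs b -> nclosure rs (fgmul a b)
  | nc_inv a : nclosure rs a -> nclosure rs (fginv a)
  | nc_conj w a : nclosure rs a -> nclosure rs (fgmul w (fgmul a (fginv w))).

Definition pres_eq (rs : presentation) (u v : F2) : Prop :=
  nclosure rs (fgmul u (fginv v)).

(* The map x |-> x, y |-> y (i.e. [w]_rs |-> [w]_Q) is a well-defined,
   injective and surjective map from <x,y | rs> to Q_{4n}.
   (It is then automatically a homomorphism.) *)
Definition regular (n : nat) (rs : presentation) : Prop :=
  [/\ (forall u v, pres_eq rs u v -> pres_eq (Qpres n) u v),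
      (forall u v, pres_eq (Qpres n) u v -> pres_eq rs u v)
    & (forall v, exists u, pres_eq (Qpres n) u v)].

Definition is_aut (phi : F2 -> F2) : Prop :=
  (forall a b, phi (fgmul a b) = fgmul (phi a) (phi b)) /\ bijective phi.

Inductive qmove : presentation -> presentation -> Prop :=
  | qm_mul (rs : presentation) (i j : nat) :
      (i < size rs)%N -> (j < size rs)%N -> i <> j ->
      qmove rs (set_nth fgone rs i (fgmul (nth fgone rs i) (nth fgone rs j)))
  | qm_inv (rs : presentation) (i : nat) :
      (i < size rs)%N ->
      qmove rs (set_nth fgone rs i (fginv (nth fgone rs i)))
  | qm_conj (rs : presentation) (i : nat) (w : F2) :
      (i < size rs)%N ->
      qmove rs (set_nth fgone rs i (fgmul w (fgmul (nth fgone rs i) (fginv w))))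
  | qm_aut (rs : presentation) (phi : F2 -> F2) :
      is_aut phi -> qmove rs (map phi rs).

Definition Qstar_equiv : presentation -> presentation -> Prop :=
  clos_refl_trans presentation qmove.

(* Both statements come from explicit automorphisms of the free
   group F(x, y).  The involution phi : x |-> x^-1, y |-> y^-1 sends each
   relator of P_n(a;b) to a conjugate of the inverse of the corresponding
   relator of P_n(b;a), and each relator of Q_{4n} to a conjugate of its own
   inverse.  Hence phi followed by inversions and conjugations of relators is a
   chain of Q*-moves from P_n(a;b) to P_n(b;a), and phi maps the normal closure
   of either presentation onto that of the other while preserving the normal
   closure of Q_{4n}, which transports regularity.  The involution
   psi : x |-> x^-1, y |-> y x^-n does the same for P_n(a;b) and P_n(a;1-b),
   because x^n commutes with the powers of x occurring in the second relator;
   with a = 2 and b = 1 - r this is E_{n,r} ~ E_{n,1-r}. *)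

From HB Require Import structures.
From mathcomp Require Import all_boot all_order all_algebra.
From mathcomp Require Import zify.
From Stdlib Require Import Relations.
Set Implicit Arguments. Unset Strict Implicit. Unset Printing Implicit Defensive.
Import GRing.Theory.

(** * Free reduction *)

Lemma linvK : involutive linv.
Proof. by case=> g b; rewrite /linv negbK. Qed.

Lemma reduce_cons l t : reduce (l :: t) = cons_red l (reduce t).
Proof. by []. Qed.

Lemma cons_red_head l t : ohead t != Some (linv l) -> cons_red l t = l :: t.
Proof. by case: t => [|l' t] //= H; rewrite ifN //; apply: contra H => /eqP ->. Qed.

Lemma cons_red_eq_cons l s t :
  (size s <= size t)%N -> cons_red l s = l :: t -> s = t.
Proof.
case: s => [|l' s] /=; first by move=> _ [<-].
by case: ifP => _ + E; [rewrite E /=; lia | case: E].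
Qed.

Lemma reduced_cons l t :
  reduced (l :: t) = reduced t && (ohead t != Some (linv l)).
Proof.
rewrite /reduced reduce_cons; case: (eqVneq (reduce t) t) => [->|Ht] /=.
  case: t => [|l' t] /=; first exact: eqxx.
  case: (eqVneq l' (linv l)) => [->|Hl]; last by rewrite eqxx (inj_eq Some_inj) Hl.
  by rewrite eqxx; apply/negbTE/eqP => /(congr1 size) /=; lia.
apply/negbTE/eqP => /(cons_red_eq_cons (size_reduce t)).
exact/eqP.
Qed.

Lemma cons_red_reduced l t : reduced t -> reduced (cons_red l t).
Proof. by move/eqP=> Ht; apply/eqP; exact: reduce_cons_red. Qed.

Lemma cons_redK l t : reduced t -> cons_red l (cons_red (linv l) t) = t.
Proof.
case: t => [|l' t] /=; first by rewrite eqxx.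
case: (eqVneq l' (linv (linv l))) => [->|_] Ht; last by rewrite /= eqxx.
by rewrite linvK in Ht *; apply: cons_red_head; rewrite reduced_cons in Ht; case/andP: Ht.
Qed.

(* Words act on reduced words by left multiplication with free cancellation;
   [reduce u] is the image of the empty word, which yields the group laws. *)
Definition act (u t : word) : word := foldr cons_red t u.

Lemma act_reduced u t : reduced t -> reduced (act u t).
Proof. by move=> Ht; elim: u => [|l u IH] //=; apply: cons_red_reduced. Qed.

Lemma act_cons_red l s t : reduced s -> reduced t ->
  act (cons_red l s) t = cons_red l (act s t).
Proof.
case: s => [|l' s] //= Hs Ht; case: (eqVneq l' (linv l)) => [El|_] //=.
rewrite El cons_redK //; apply: act_reduced.
by rewrite reduced_cons in Hs; case/andP: Hs.
Qed.

Lemma act_reduce u t : reduced t -> act (reduce u) t = act u t.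
Proof.
move=> Ht; elim: u => [|l u IH] //.
by rewrite reduce_cons act_cons_red ?reduce_reduced // IH.
Qed.

Lemma reduce_cat u v : reduce (u ++ v) = act u (reduce v).
Proof. exact: foldr_cat. Qed.

Definition winv (u : word) : word := rev (map linv u).

Lemma winvK : involutive winv.
Proof. by move=> u; rewrite /winv map_rev revK -map_comp (eq_map linvK) map_id. Qed.

Lemma act_winv u t : reduced t -> act u (act (winv u) t) = t.
Proof.
elim: u t => [|l u IH] t Ht //=.
rewrite /winv map_cons rev_cons -cats1 /act foldr_cat /= -/(act _ _) -/(winv u).
by rewrite IH ?cons_redK ?cons_red_reduced.
Qed.

Lemma reduce_cat_winv u : reduce (u ++ winv u) = [::].
Proof. by rewrite reduce_cat act_winv. Qed.

(** * The free group *)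

Lemma mkF_val a : mkF (val a) = a.
Proof. by apply: val_inj; apply/eqP; exact: (valP a). Qed.

Lemma fgmul_mkF u v : fgmul (mkF u) (mkF v) = mkF (u ++ v).
Proof.
apply: val_inj => /=.
by rewrite !reduce_cat act_reduce ?reduce_reduced // (eqP (reduce_reduced v)).
Qed.

Lemma fgmulA : associative fgmul.
Proof.
by move=> a b c; rewrite -(mkF_val a) -(mkF_val b) -(mkF_val c) !fgmul_mkF catA.
Qed.

Lemma fg1mul : left_id fgone fgmul.
Proof. by move=> a; rewrite -(mkF_val a) fgmul_mkF. Qed.

Lemma fgmul1 : right_id fgone fgmul.
Proof. by move=> a; rewrite -(mkF_val a) fgmul_mkF cats0. Qed.

Lemma fgmulV : right_inverse fgone fginv fgmul.
Proof.
move=> a; rewrite -{1}(mkF_val a) fgmul_mkF.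
by apply: val_inj; rewrite /= reduce_cat_winv.
Qed.

Lemma fgVmul : left_inverse fgone fginv fgmul.
Proof.
move=> a; rewrite -{2}(mkF_val a) -[val a]winvK fgmul_mkF.
by apply: val_inj; rewrite /= reduce_cat_winv.
Qed.

HB.instance Definition _ := Choice.copy F2 {w : word | reduced w}.
HB.instance Definition _ := isGroup.Build F2 fgmulA fg1mul fgmul1 fgVmul fgmulV.

Local Open Scope group_scope.

Lemma fgmulE (a b : F2) : fgmul a b = a * b. Proof. by []. Qed.
Lemma fginvE (a : F2) : fginv a = a^-1. Proof. by []. Qed.
Lemma fgprod_cons (a : F2) s : fgprod (a :: s) = a * fgprod s. Proof. by []. Qed.

Arguments fgpow : simpl never.

Lemma fgpowE (g : F2) k :
  fgpow g k = if k is Negz m then g ^- m.+1 else g ^+ `|k|%N.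
Proof. by case: k => m; rewrite /fgpow -?expVgn; exact: iter_mulg_1. Qed.

Lemma fgpowV (g : F2) k : fgpow g^-1 k = (fgpow g k)^-1.
Proof. by rewrite !fgpowE; case: k => m; rewrite expVgn ?invgK. Qed.

Lemma commute_fgpow (g h : F2) k : commute g h -> commute g (fgpow h k).
Proof.
by rewrite fgpowE; case: k => m gh; [apply: commuteX | apply/commuteV/commuteX].
Qed.

Lemma commute_fgpow2 (g : F2) k l : commute (fgpow g k) (fgpow g l).
Proof. exact/commute_fgpow/commute_sym/commute_fgpow/commute_refl. Qed.

Lemma gmulf_fgpow (h : UMagmaMorphism.type F2 F2) g k : h (fgpow g k) = fgpow (h g) k.
Proof. by rewrite !fgpowE; case: k => m; [exact: gmulfXn | exact: gmulfXVn]. Qed.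

(** * Homomorphisms out of the free group *)

Definition letter_val (base : bool -> F2) (l : letter) : F2 :=
  if l.2 then (base l.1)^-1 else base l.1.

Definition F2_lift (base : bool -> F2) (a : F2) : F2 :=
  \prod_(l <- val a) letter_val base l.

Section Lift.
Variable base : bool -> F2.

Lemma letter_val_linv l : letter_val base (linv l) = (letter_val base l)^-1.
Proof. by case: l => g []; rewrite /letter_val /= ?invgK. Qed.

Lemma prod_cons_red l s :
  \prod_(l' <- cons_red l s) letter_val base l' =
  letter_val base l * \prod_(l' <- s) letter_val base l'.
Proof.
case: s => [|l' s] /=; first by rewrite big_cons.
case: (eqVneq l' (linv l)) => [->|_]; last by rewrite big_cons.
by rewrite !big_cons letter_val_linv mulVKg.
Qed.

Lemma prod_reduce w :
  \prod_(l <- reduce w) letter_val base l = \prod_(l <- w) letter_val base l.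
Proof. by elim: w => [|l w IH]; rewrite ?reduce_cons ?prod_cons_red ?big_cons ?IH. Qed.

Lemma F2_liftM : {morph F2_lift base : a b / a * b}.
Proof. by move=> a b; rewrite /F2_lift /= prod_reduce big_cat. Qed.

Lemma F2_lift1 : F2_lift base 1 = 1.
Proof. exact: big_nil. Qed.

End Lift.

HB.instance Definition _ base :=
  isUMagmaMorphism.Build F2 F2 (F2_lift base) (F2_lift1 base, F2_liftM base).

Lemma F2_lift_x base : F2_lift base gx = base false.
Proof. exact: big_seq1. Qed.

Lemma F2_lift_y base : F2_lift base gy = base true.
Proof. exact: big_seq1. Qed.

Definition F2_gen (g : bool) : F2 := if g then gy else gx.

Lemma F2_lift_gen : F2_lift F2_gen =1 id.
Proof.
move=> a; rewrite -[RHS]mkF_val /F2_lift.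
elim: (val a) => [|l w IH]; first exact: big_nil.
rewrite big_cons IH; suff -> : letter_val F2_gen l = mkF [:: l] by exact: fgmul_mkF.
by case: l => -[] []; apply: val_inj.
Qed.

Lemma gmulf_F2_lift (h : UMagmaMorphism.type F2 F2) base a :
  h (F2_lift base a) = F2_lift (h \o base) a.
Proof.
rewrite gmulf_prod; apply: eq_bigr => -[g []] _ //=.
exact: gmulfV.
Qed.

Lemma F2_morph_id (h : UMagmaMorphism.type F2 F2) : h gx = gx -> h gy = gy -> h =1 id.
Proof.
move=> hx hy a; rewrite -[in LHS](F2_lift_gen a) gmulf_F2_lift -[RHS]F2_lift_gen /F2_lift.
by apply: eq_bigr => -[[] b] _; rewrite /letter_val /= ?hx ?hy.
Qed.

Lemma F2_lift_involutive base :
  F2_lift base (base false) = gx -> F2_lift base (base true) = gy ->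
  involutive (F2_lift base).
Proof.
move=> base_x base_y; apply: (F2_morph_id (h := F2_lift base \o F2_lift base)).
  by rewrite /= F2_lift_x.
by rewrite /= F2_lift_y.
Qed.

Lemma involutive_is_aut (h : UMagmaMorphism.type F2 F2) : involutive h -> is_aut h.
Proof. by move=> hK; split; [exact: gmulfM | exact: inv_bij]. Qed.

(** * Normal closures and Q*-moves *)

Definition sym_conjugate (r s : F2) : Prop := exists w, s = r ^ w \/ s = r^-1 ^ w.

Lemma sym_conjugate_sym r s : sym_conjugate r s -> sym_conjugate s r.
Proof.
case=> w [->|->]; exists w^-1; first by left; rewrite conjgK.
by right; rewrite -conjVg invgK conjgK.
Qed.

Lemma nclosure_conjg rs a w : nclosure rs a -> nclosure rs (a ^ w).
Proof. by move/(nc_conj w^-1); rewrite fginvE invgK. Qed.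

Lemma nclosure_sym_conjugate rs r s :
  r \in rs -> sym_conjugate r s -> nclosure rs s.
Proof.
move=> /nc_rel r_rs [w [->|->]]; apply: nclosure_conjg => //.
exact: nc_inv.
Qed.

Lemma nclosure_morph (h : UMagmaMorphism.type F2 F2) rs ss :
  (forall r, r \in rs -> nclosure ss (h r)) ->
  forall a, nclosure rs a -> nclosure ss (h a).
Proof.
move=> hrs a; elim=> {a} [|r /hrs //|a b _ ha _ hb|a _ ha|w a _ ha].
- rewrite -[fgone]/(1 : F2) gmulf1; exact: nc_one.
- by rewrite -[fgmul a b]/(a * b) gmulfM; exact: nc_mul.
- by rewrite -[fginv a]/(a^-1) gmulfV; exact: nc_inv.
- rewrite -[fgmul w _]/(w * (a * w^-1)) !gmulfM gmulfV; exact: nc_conj.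
Qed.

Lemma Qstar_aut rs h : is_aut h -> Qstar_equiv rs (map h rs).
Proof. by move=> h_aut; apply: rt_step; apply: qm_aut. Qed.

Lemma Qstar_sym_conjugate_nth rs i s : (i < size rs)%N ->
  sym_conjugate (nth 1 rs i) s -> Qstar_equiv rs (set_nth 1 rs i s).
Proof.
move=> lt_i_rs [w [->|->]].
  by apply: rt_step; have := qm_conj w^-1 lt_i_rs; rewrite fginvE invgK.
apply: (rt_trans _ _ _ (set_nth 1 rs i (nth 1 rs i)^-1)).
  exact/rt_step/qm_inv.
apply: rt_step; have := qm_conj w^-1 (i := i) (rs := set_nth 1 rs i (nth 1 rs i)^-1).
rewrite size_set_nth nth_set_nth set_set_nth /= !eqxx fginvE invgK (maxn_idPr lt_i_rs).
exact.
Qed.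

Lemma Qstar_sym_conjugate2 r1 r2 s1 s2 : sym_conjugate r1 s1 -> sym_conjugate r2 s2 ->
  Qstar_equiv [:: r1; r2] [:: s1; s2].
Proof.
move=> r1s1 r2s2; apply: (rt_trans _ _ _ [:: s1; r2]).
  exact: (@Qstar_sym_conjugate_nth [:: r1; r2] 0 _ erefl r1s1).
exact: (@Qstar_sym_conjugate_nth [:: s1; r2] 1 _ erefl r2s2).
Qed.

Lemma nclosure_morph2 (h : UMagmaMorphism.type F2 F2) r1 r2 s1 s2 :
  sym_conjugate s1 (h r1) -> sym_conjugate s2 (h r2) ->
  forall a, nclosure [:: r1; r2] a -> nclosure [:: s1; s2] (h a).
Proof.
move=> s1h1 s2h2; apply: nclosure_morph => r; rewrite !inE => /orP[]/eqP->.
  by apply: nclosure_sym_conjugate s1h1; rewrite mem_head.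
by apply: nclosure_sym_conjugate s2h2; rewrite !inE eqxx orbT.
Qed.

Lemma pres_eq1 rs a : pres_eq rs a 1 <-> nclosure rs a.
Proof. by rewrite /pres_eq fginvE invg1 fgmulE mulg1. Qed.

Lemma regular_transfer n rs ss (h : UMagmaMorphism.type F2 F2) : involutive h ->
  (forall a, nclosure rs a -> nclosure ss (h a)) ->
  (forall a, nclosure ss a -> nclosure rs (h a)) ->
  (forall a, nclosure (Qpres n) a -> nclosure (Qpres n) (h a)) ->
  regular n rs -> regular n ss.
Proof.
move=> hK rs_ss ss_rs hQ [rsQ Qrs surj]; split=> // u v.
  by move=> /ss_rs/pres_eq1/rsQ/pres_eq1/hQ; rewrite hK.
by move=> /hQ/pres_eq1/Qrs/pres_eq1/rs_ss; rewrite hK.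
Qed.

(** * The automorphisms phi and psi *)

Definition rel_pow (n : nat) : F2 := fgprod [:: fgpow gx n; fgpow gy (-2)].
Definition rel_Q : F2 := fgprod [:: gx; gy; gx; fginv gy].
Definition rel_P (a b : int) : F2 :=
  fgprod [:: fgpow gx a; gy; fgpow gx b; fginv gy;
             fgpow gx (1 - a)%R; gy; fgpow gx (1 - b)%R; fginv gy].

Lemma QpresE n : Qpres n = [:: rel_pow n; rel_Q]. Proof. by []. Qed.
Lemma PpresE n a b : Ppres n a b = [:: rel_pow n; rel_P a b]. Proof. by []. Qed.

Lemma rel_powE n : rel_pow n = fgpow gx n * gy^-1 * gy^-1.
Proof. by rewrite /rel_pow !fgprod_cons !mulg1 mulgA. Qed.

Lemma rel_QE : rel_Q = gx * gy * gx * gy^-1.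
Proof. by rewrite /rel_Q !fgprod_cons mulg1 !mulgA. Qed.

Lemma rel_PE a b : rel_P a b =
  fgpow gx a * fgpow gx b ^ gy^-1 * fgpow gx (1 - a)%R * fgpow gx (1 - b)%R ^ gy^-1.
Proof. by rewrite /rel_P !fgprod_cons mulg1 /conjg invgK !mulgA. Qed.

Lemma gmulf_rel_P (h : UMagmaMorphism.type F2 F2) a b : h (rel_P a b) =
  h (fgpow gx a) * h (fgpow gx b) ^ (h gy)^-1 *
  h (fgpow gx (1 - a)%R) * h (fgpow gx (1 - b)%R) ^ (h gy)^-1.
Proof. by rewrite rel_PE !gmulfM !gmulfV. Qed.

Definition phi : F2 -> F2 := F2_lift (fun g => (F2_gen g)^-1).
HB.instance Definition _ := UMagmaMorphism.on phi.

Lemma phiV : involutive phi.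
Proof. by apply: F2_lift_involutive; rewrite gmulfV /= ?F2_lift_x ?F2_lift_y invgK. Qed.

Lemma phi_x : phi gx = gx^-1. Proof. exact: F2_lift_x. Qed.
Lemma phi_y : phi gy = gy^-1. Proof. exact: F2_lift_y. Qed.

Lemma phi_fgpow_x k : phi (fgpow gx k) = (fgpow gx k)^-1.
Proof. by rewrite gmulf_fgpow /= phi_x fgpowV. Qed.

Lemma phi_rel_pow n : sym_conjugate (phi (rel_pow n)) (rel_pow n).
Proof.
exists (fgpow gx n)^-1; right.
rewrite !rel_powE !gmulfM !gmulfV /= phi_fgpow_x phi_y.
by move: (fgpow gx n) gy => N Y; rewrite /conjg !gnorm.
Qed.

Lemma phi_rel_Q : sym_conjugate (phi rel_Q) rel_Q.
Proof.
exists gy^-1; right.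
rewrite !rel_QE !gmulfM !gmulfV /= phi_x phi_y.
by move: gx gy => X Y; rewrite /conjg !gnorm.
Qed.

Lemma phi_rel_P a b : sym_conjugate (phi (rel_P a b)) (rel_P b a).
Proof.
exists (fgpow gx b * gy * fgpow gx a)^-1; right.
rewrite gmulf_rel_P /= !phi_fgpow_x phi_y invgK rel_PE.
move: (fgpow gx a) (fgpow gx b) (fgpow gx (1 - a)) (fgpow gx (1 - b)) gy => A B C D Y.
by rewrite /conjg !gnorm.
Qed.

Lemma Qstar_P_swap n a b : Qstar_equiv (Ppres n a b) (Ppres n b a).
Proof.
apply: rt_trans (Qstar_aut _ (involutive_is_aut phiV)) _.
rewrite !PpresE /=; exact: Qstar_sym_conjugate2 (phi_rel_pow n) (phi_rel_P a b).
Qed.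

Lemma regular_P_swap n a b : regular n (Ppres n a b) -> regular n (Ppres n b a).
Proof.
have phi_P c d : forall u, nclosure (Ppres n c d) u -> nclosure (Ppres n d c) (phi u).
  rewrite !PpresE; apply: nclosure_morph2; apply: sym_conjugate_sym.
    exact: phi_rel_pow.
  exact: phi_rel_P.
apply: (regular_transfer phiV); [exact: phi_P | exact: phi_P |].
rewrite QpresE; apply: nclosure_morph2; apply: sym_conjugate_sym.
  exact: phi_rel_pow.
exact: phi_rel_Q.
Qed.

Definition psi (n : nat) : F2 -> F2 :=
  F2_lift (fun g => if g then gy * (fgpow gx n)^-1 else gx^-1).
HB.instance Definition _ n := UMagmaMorphism.on (psi n).

Lemma psi_x n : psi n gx = gx^-1. Proof. exact: F2_lift_x. Qed.
Lemma psi_y n : psi n gy = gy * (fgpow gx n)^-1. Proof. exact: F2_lift_y. Qed.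

Lemma psi_fgpow_x n k : psi n (fgpow gx k) = (fgpow gx k)^-1.
Proof. by rewrite gmulf_fgpow /= psi_x fgpowV. Qed.

Lemma psiV n : involutive (psi n).
Proof.
apply: F2_lift_involutive; rewrite -/(psi n) /=; first by rewrite gmulfV /= psi_x invgK.
by rewrite gmulfM gmulfV /= psi_y psi_fgpow_x invgK mulgVK.
Qed.

Lemma psi_rel_pow n : sym_conjugate (psi n (rel_pow n)) (rel_pow n).
Proof.
exists gy^-1; left.
rewrite !rel_powE !gmulfM !gmulfV /= psi_fgpow_x psi_y.
by move: (fgpow gx n) gy => N Y; rewrite /conjg !gnorm.
Qed.

Lemma psi_rel_P n a b : sym_conjugate (psi n (rel_P a b)) (rel_P a (1 - b)).
Proof.
exists (fgpow gx a)^-1; right.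
have psi_yV : (psi n gy)^-1 = fgpow gx n / gy by rewrite psi_y invgM invgK.
have fix_xn k : (fgpow gx k)^-1 ^ fgpow gx n = (fgpow gx k)^-1.
  by apply/conjg_fixP/commgP; apply/commute_sym/commuteV; exact: commute_fgpow2.
rewrite gmulf_rel_P /= !psi_fgpow_x psi_yV !conjgM !fix_xn rel_PE subKr.
move: (fgpow gx a) (fgpow gx b) (fgpow gx (1 - a)) (fgpow gx (1 - b)) gy => A B C D Y.
by rewrite /conjg !gnorm.
Qed.

Lemma Qstar_P_reflect n a b : Qstar_equiv (Ppres n a b) (Ppres n a (1 - b)).
Proof.
apply: rt_trans (Qstar_aut _ (involutive_is_aut (psiV n))) _.
rewrite !PpresE /=; exact: Qstar_sym_conjugate2 (psi_rel_pow n) (psi_rel_P n a b).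
Qed.

Theorem proposition3p22 (n : nat) : (2 <= n)%N ->
  (forall n1 m1 : int, regular n (Ppres n n1 m1) ->
     regular n (Ppres n m1 n1) /\ Qstar_equiv (Ppres n n1 m1) (Ppres n m1 n1))
  /\ (forall r : int, Qstar_equiv (Epres n r) (Epres n (1 - r)%R)).
Proof.
(* The argument works for every n. *)
move=> _; split=> [n1 m1 reg|r].
  by split; [exact: regular_P_swap | exact: Qstar_P_swap].
exact: Qstar_P_reflect.
Qed.
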